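(* Let $\langle B,\wedge,{}'\rangle$ be an algebra with $\wedge$ binary and ${}'$ unary satisfying $(x\wedge y)\wedge z\approx (y\wedge z)\wedge x$ and $x\approx (x'\wedge y)'\wedge(x'\wedge y')'$. Then $x\wedge(y\wedge z)=z\wedge(y\wedge x)$ for all $x,y,z\in B$. *)


(* The rotation law alone already gives [a ∧ (y ∧ b) = b ∧ (y ∧ a)] whenever
   [a] and [b] are themselves meets, and the second law writes every element
   as a meet. *)

Section RotativeMeet.

Context {B : Type} {meet : B -> B -> B}.

Hypothesis meet_rotate : forall x y z, meet (meet x y) z = meet (meet y z) x.

Lemma meet_outer_swap_meets x1 x2 y z1 z2 :
  meet (meet x1 x2) (meet y (meet z1 z2)) = meet (meet z1 z2) (meet y (meet x1 x2)).
Proof.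
  rewrite <- (meet_rotate (meet y (meet z1 z2)) x1 x2).
  rewrite (meet_rotate y (meet z1 z2) x1), (meet_rotate z1 z2 x1).
  rewrite (meet_rotate (meet z2 x1) z1 y), (meet_rotate (meet z1 y) (meet z2 x1) x2).
  rewrite (meet_rotate z2 x1 x2).
  rewrite <- (meet_rotate (meet z1 y) (meet x1 x2) z2).
  rewrite (meet_rotate z1 y (meet x1 x2)).
  apply meet_rotate.
Qed.

End RotativeMeet.

Lemma every_element_is_meet {B : Type} {meet : B -> B -> B} {c : B -> B}
  (H2 : forall x y : B, x = meet (c (meet (c x) y)) (c (meet (c x) (c y)))) :
  forall x : B, exists u v, x = meet u v.
Proof.
  intros x. exists (c (meet (c x) x)), (c (meet (c x) (c x))). apply H2.
Qed.

Theorem lemma9p8 (B : Type) (meet : B -> B -> B) (c : B -> B)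
  (H1 : forall x y z : B, meet (meet x y) z = meet (meet y z) x)
  (H2 : forall x y : B, x = meet (c (meet (c x) y)) (c (meet (c x) (c y)))) :
  forall x y z : B, meet x (meet y z) = meet z (meet y x).
Proof.
  intros x y z.
  destruct (every_element_is_meet (meet := meet) (c := c) H2 x) as (x1 & x2 & ->).
  destruct (every_element_is_meet (meet := meet) (c := c) H2 z) as (z1 & z2 & ->).
  apply (meet_outer_swap_meets H1).
Qed.
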